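(* Under the hypotheses of the Simultaneous Polynomial Ergodicity theorem (Assumption (A), simultaneous polynomial drift $P_\gamma V\le V-cV^\alpha+b1_C$ for all $\gamma$ with $\alpha>2/3$ and $\sup_{x\in C}V(x)<\infty$), there exists $M<\infty$ such that for the AirMCMC chain started at $(X_0,\gamma_0)$, for all $n>0$ and all $m\ge M$, $$\mathbb P_{(X_0,\gamma_0)}\big(V^{2\alpha-1}(X_n)>m\big)\le M\,V(X_0)\,\frac{\log(1+m)}{m}.$$
   Context: Assumption (A): each $P_\gamma$ is $\pi$-invariant, $\pi$-irreducible, aperiodic, and $P_\gamma(x,\cdot)\ge\delta\nu(\cdot)$ for $x\in C$, all $\gamma$, with $\pi(C)>0$. $V:\mathcal X\to[1,\infty)$, $c>0$, $b<\infty$. AirMCMC chain: $(X_n,\gamma_n)$ with $\gamma_n$ produced by an arbitrary (possibly randomised) adaptation rule from the past; with lags $n_k$, $N_0=0$, $N_j=\sum_{k\le j}n_k$, for $N_j\le n<N_{j+1}$, conditionally on the past, $X_{n+1}\sim P_{\gamma_{N_j}}(X_n,\cdot)$. $\mathbb P_{(X_0,\gamma_0)}$ is its law started at $(X_0,\gamma_0)$. *)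

From HB Require Import structures.
From mathcomp Require Import all_boot all_order all_algebra.
From mathcomp Require Import all_classical all_reals all_analysis measurable_realfun.
Set Implicit Arguments. Unset Strict Implicit. Unset Printing Implicit Defensive.
Import Order.TTheory GRing.Theory Num.Theory.
Import numFieldNormedType.Exports.
Local Open Scope classical_set_scope.
Local Open Scope ring_scope.

Definition kernel_family_measurable (R : realType)
  (dX dG : measure_display) (X : measurableType dX) (G : measurableType dG)
  (P : G -> X -> probability X R) : Prop :=
  forall A : set X, measurable A ->
    measurable_fun [set: X * G] (fun p : X * G => P p.2 p.1 A).

Fixpoint kpow (R : realType) (dX : measure_display) (X : measurableType dX)
  (Q : X -> probability X R) (n : nat) : X -> set X -> \bar R :=
  match n with
  | 0 => fun x A => \d_x A
  | S k => fun x A => (\int[Q x]_y kpow Q k y A)%E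
  end.

Definition invariant (R : realType) (dX : measure_display) (X : measurableType dX)
  (Q : X -> probability X R) (pi : probability X R) : Prop :=
  forall A : set X, measurable A -> pi A = (\int[pi]_x Q x A)%E.

Definition irreducible (R : realType) (dX : measure_display) (X : measurableType dX)
  (Q : X -> probability X R) (pi : probability X R) : Prop :=
  forall A : set X, measurable A -> (0 < pi A)%E ->
    forall x : X, exists n : nat, (0 < n)%N /\ (0 < kpow Q n x A)%E.

(* aperiodicity (Roberts--Rosenthal convention): there is no d >= 2 and
   pairwise disjoint measurable sets D_0, ..., D_{d-1} of positive pi-measure
   with Q(x, D_{(i+1) mod d}) = 1 for all x in D_i. *)
Definition aperiodic (R : realType) (dX : measure_display) (X : measurableType dX)
  (Q : X -> probability X R) (pi : probability X R) : Prop :=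
  ~ exists (d : nat) (D : nat -> set X),
      [/\ (2 <= d)%N,
          (forall i, (i < d)%N -> measurable (D i) /\ (0 < pi (D i))%E),
          (forall i j, (i < d)%N -> (j < d)%N -> i <> j -> D i `&` D j = set0)
        & (forall i, (i < d)%N -> forall x, D i x -> Q x (D ((i.+1) %% d)%N) = 1%E)].

Definition assumptionA (R : realType) (dX dG : measure_display)
  (X : measurableType dX) (G : measurableType dG)
  (P : G -> X -> probability X R) (pi : probability X R)
  (C : set X) (delta : R) (nu : probability X R) : Prop :=
  (forall g, invariant (P g) pi) /\
  (forall g, irreducible (P g) pi) /\
  (forall g, aperiodic (P g) pi) /\
  0 < delta /\
  (forall g x, C x -> forall A, measurable A -> ((delta%:E * nu A) <= P g x A)%E) /\
  measurable C /\
  (0 < pi C)%E.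

Definition simultaneous_poly_drift (R : realType) (dX dG : measure_display)
  (X : measurableType dX) (G : measurableType dG)
  (P : G -> X -> probability X R) (V : X -> R) (c alpha b : R) (C : set X) : Prop :=
  forall g x, (\int[P g x]_y (V y)%:E <=
               (V x - c * V x `^ alpha + b * (\1_C x : R))%:E)%E.

(* N_j = n_1 + ... + n_j (so N_0 = 0); lags n_k for k >= 1. *)
Definition Ncum (lag : nat -> nat) (j : nat) : nat := (\sum_(1 <= k < j.+1) lag k)%N.

Definition sub_sigma (dO : measure_display) (O : measurableType dO)
  (F : set (set O)) : Prop :=
  sigma_algebra setT F /\ F `<=` measurable.

Definition measurable_wrt (dO dY : measure_display) (O : measurableType dO)
  (Y : measurableType dY) (F : set (set O)) (f : O -> Y) : Prop :=
  forall A : set Y, measurable A -> F (f @^-1` A).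

(* The AirMCMC chain (X_n, gamma_n) on (Omega, Pr) with filtration F, lags
   lag, kernels P, started at (x0, g0); gamma_n is produced by an arbitrary
   (possibly randomised) rule from the past, i.e. is F_n-measurable. For
   N_j <= n < N_{j+1}, conditionally on F_n, X_{n+1} ~ P_{gamma_{N_j}}(X_n, .),
   expressed as: Pr(E /\ X_{n+1} in A) = E[1_E P_{gamma_{N_j}}(X_n, A)]
   for all E in F_n and measurable A. *)
Definition AirMCMC (R : realType) (dX dG dO : measure_display)
  (X : measurableType dX) (G : measurableType dG) (O : measurableType dO)
  (P : G -> X -> probability X R) (lag : nat -> nat)
  (Pr : probability O R) (F : nat -> set (set O))
  (Xs : nat -> O -> X) (gs : nat -> O -> G) (x0 : X) (g0 : G) : Prop :=
  (forall n, sub_sigma (F n)) /\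
  (forall n, F n `<=` F n.+1) /\
  (forall n, measurable_wrt (F n) (Xs n)) /\
  (forall n, measurable_wrt (F n) (gs n)) /\
  (forall w, Xs 0%N w = x0) /\
  (forall w, gs 0%N w = g0) /\
  (forall j n, (Ncum lag j <= n < Ncum lag j.+1)%N ->
        forall A : set X, measurable A -> forall E : set O, F n E ->
          Pr (E `&` (Xs n.+1 @^-1` A)) =
          (\int[Pr]_(w in E) P (gs (Ncum lag j) w) (Xs n w) A)%E).

From HB Require Import structures.
From mathcomp Require Import all_boot all_order all_algebra.
From mathcomp Require Import all_classical all_reals all_analysis measurable_realfun.
From mathcomp Require Import ring lra.
Set Implicit Arguments. Unset Strict Implicit. Unset Printing Implicit Defensive.
Import Order.TTheory GRing.Theory Num.Theory.
Import numFieldNormedType.Exports. Import Num.Def.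
Local Open Scope classical_set_scope.
Local Open Scope ring_scope.

(* Truncate the drift function: [f_y = min 1 (V / y)].  Along a schedule
   [y_0 < y_1 < ...] whose increments satisfy [y_{t+1} - y_t <= c y_{t+1}^alpha],
   the drift inequality gives [E f_{y_t}(X_{j+1}) <= E f_{y_{t+1}}(X_j) + B / y_t]
   whichever kernel [P_gamma] the adaptation has selected, since below
   [y_{t+1}] the loss [c V^alpha] compensates the growth of the schedule and on
   [C] the increase of [V] is at most [B].  Telescoping over [n] steps gives
   [E f_{y_0}(X_n) <= V(X_0) / y_n + B sum_t 1 / y_t].  For
   [y_t = (m^(1/(q+1)) + kap t)^(q+2)] with [q + 1 <= (q + 2) alpha] and
   [(2 alpha - 1)(q + 2) <= q + 1], which is possible because [alpha > 2/3],
   both terms are [O(1/m)], and [{V^(2 alpha - 1)(X_n) > m}] is contained in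
   [{V(X_n) >= y_0}], whose probability is at most [E f_{y_0}(X_n)]. *)

Lemma subrXX_le (R : realType) (u w : R) n : 0 <= w -> w <= u ->
  u ^+ n.+1 - w ^+ n.+1 <= n.+1%:R * (u - w) * u ^+ n.
Proof.
move=> w0 wu; have u0 : 0 <= u := le_trans w0 wu.
elim: n => [|n IH]; first by rewrite !expr1 expr0 mul1r mulr1.
have wXu : w ^+ n.+1 <= u ^+ n.+1 by rewrite lerXn2r // nnegrE.
have -> : u ^+ n.+2 - w ^+ n.+2 = u * (u ^+ n.+1 - w ^+ n.+1) + w ^+ n.+1 * (u - w).
  by rewrite !exprS; ring.
have -> : n.+2%:R * (u - w) * u ^+ n.+1 =
    u * (n.+1%:R * (u - w) * u ^+ n) + u ^+ n.+1 * (u - w).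
  by rewrite (natrD _ 1 n.+1) exprS; ring.
by rewrite lerD ?ler_wpM2l ?ler_wpM2r // subr_ge0.
Qed.

Lemma exists_schedule_exponent (R : realType) (alpha : R) :
  2 / 3 < alpha -> alpha < 1 ->
  exists q : nat, q.+1%:R <= q.+2%:R * alpha /\ (2 * alpha - 1) * q.+2%:R <= q.+1%:R.
Proof.
move=> a23 a1.
have d0 : 0 < 2 - 2 * alpha by lra.
set x := (2 - 2 * alpha)^-1.
have hx : x * (2 - 2 * alpha) = 1 by rewrite mulVf // gt_eqF.
have x1 : 1 <= x.
  by rewrite -[leLHS]hx; apply: ler_piMr; rewrite ?invr_ge0 ?ltW //; lra.
have /andP[t1 t2] := truncn_itv (le_trans ler01 x1).
have q1 : (1 <= truncn x)%N by rewrite truncn_ge_nat // (le_trans ler01 x1).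
exists (truncn x).-1; rewrite prednK // -addn1 natrD.
have := ler_wpM2r (ltW d0) t1; have := ler_wpM2r (ltW d0) (ltW t2).
rewrite hx -addn1 natrD => hq2 hq1; split; nra.
Qed.

Lemma mul_powR_le_powR_mul (R : realType) (alpha s y : R) :
  0 <= alpha <= 1 -> 0 < s -> s <= y -> s * y `^ alpha <= s `^ alpha * y.
Proof.
move=> /andP[a0 a1] s0 sy; have y0 : 0 < y := lt_le_trans s0 sy.
have split_pow z : 0 < z -> z = z `^ alpha * z `^ (1 - alpha).
  move=> z0; rewrite -powRD; last by apply/implyP => _; rewrite gt_eqF.
  by rewrite addrC subrK powRr1 // ltW.
rewrite {1}(split_pow s s0) {2}(split_pow y y0) mulrAC [in leRHS]mulrA.
rewrite ler_wpM2l ?mulr_ge0 ?powR_ge0 //.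
by rewrite ge0_ler_powR ?subr_ge0 // nnegrE ltW.
Qed.

Lemma exists_step_size (R : realType) (c : R) k : 0 < c ->
  exists kap : R, [/\ 0 < kap, kap <= 1 & kap * k.+1%:R <= c].
Proof.
move=> c0; exists (minr 1 (c / k.+1%:R)); split.
- by rewrite lt_min ltr01 divr_gt0.
- by rewrite ge_min lexx.
- by rewrite -ler_pdivlMr ?ltr0n // ge_min lexx orbT.
Qed.

Section Root.
Variables (R : realType) (q : nat).
Let e : R := (q.+1%:R)^-1.

Lemma powR_invnX (m : R) : 0 <= m -> (m `^ e) ^+ q.+1 = m.
Proof.
by move=> m0; rewrite -powR_mulrn ?powR_ge0 // -powRrM mulVf ?powRr1.
Qed.

Lemma powR_invn_ge1 (m : R) : 1 <= m -> 1 <= m `^ e.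
Proof.
move=> m1; have e0 : 0 <= e by rewrite invr_ge0.
have := @ge0_ler_powR R e e0 1 m.
by rewrite powR1 => ->; rewrite ?nnegrE ?(le_trans ler01 m1).
Qed.

Lemma powR_invnX_le (beta m v : R) : 0 <= beta -> beta * q.+2%:R <= q.+1%:R ->
  1 <= m -> 1 <= v -> m < v `^ beta -> (m `^ e) ^+ q.+2 <= v.
Proof.
move=> beta0 hbeta m1 v1 mv; have v0 : 0 <= v := le_trans ler01 v1.
have e0 : 0 <= e * q.+2%:R by rewrite mulr_ge0 ?invr_ge0.
rewrite -powR_mulrn ?powR_ge0 // -powRrM.
apply: le_trans (_ : (v `^ beta) `^ (e * q.+2%:R) <= _).
  by rewrite ge0_ler_powR ?nnegrE ?powR_ge0 ?(le_trans ler01 m1) // ltW.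
rewrite -powRrM -[leRHS](powRr1 v0) ler_powR // mulrA -[leRHS](@mulfV _ q.+1%:R) ?pnatr_eq0 //.
by rewrite mulrAC ler_pM2r ?invr_gt0 ?ltr0n.
Qed.

End Root.

Lemma inv_sqr_le_telescope (R : realType) (kap w : R) : 0 < kap -> kap <= w ->
  (w ^+ 2)^-1 <= 2 / (kap * w) - 2 / (kap * (w + kap)).
Proof.
move=> k0 kw; have w0 : 0 < w := lt_le_trans k0 kw.
rewrite -subr_ge0.
have -> : 2 / (kap * w) - 2 / (kap * (w + kap)) - (w ^+ 2)^-1 =
    (w - kap) / (w ^+ 2 * (w + kap)).
  by field; rewrite !gt_eqF ?addr_gt0.
by rewrite divr_ge0 ?subr_ge0 // mulr_ge0 ?exprn_ge0 ?addr_ge0 ?ltW.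
Qed.

Lemma addr_div_le_maxr_ln (R : realType) (u d m : R) :
  1 <= u -> 0 <= d -> expR 1 <= m ->
  u / m + d / m <= maxr (expR 1) (1 + d) * u * ln (1 + m) / m.
Proof.
move=> u1 d0 me; have m0 : 0 < m := lt_le_trans (expR_gt0 1) me.
rewrite -mulrDl; apply: ler_wpM2r; first by rewrite invr_ge0 ltW.
have ln1 : 1 <= ln (1 + m).
  rewrite -[leLHS](expRK 1) ler_ln ?posrE ?expR_gt0 ?addr_gt0 //.
  by rewrite (le_trans me) // lerDr.
have dM : 1 + d <= maxr (expR 1) (1 + d) by rewrite le_max lexx orbT.
have u0 : 0 <= u := le_trans ler01 u1.
have Mu0 : 0 <= maxr (expR 1) (1 + d) * u by rewrite mulr_ge0 // (le_trans _ dM) ?addr_ge0.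
have : (1 + d) * u <= maxr (expR 1) (1 + d) * u by rewrite ler_wpM2r.
have : 0 <= d * (u - 1) by rewrite mulr_ge0 ?subr_ge0.
have : 0 <= maxr (expR 1) (1 + d) * u * (ln (1 + m) - 1) by rewrite mulr_ge0 ?subr_ge0.
lra.
Qed.

Definition trunc_ratio {R : realType} {T : Type} (V : T -> R) (y : R) (x : T) : R :=
  minr 1 (V x / y).

Lemma trunc_ratio_drift_le (R : realType) (alpha c s y y' : R) :
  0 < alpha < 1 -> 0 <= c -> 0 < s -> 0 < y -> 0 < y' ->
  y' - y <= c * y' `^ alpha ->
  trunc_ratio id y (s - c * s `^ alpha) <= trunc_ratio id y' s.
Proof.
rewrite /trunc_ratio /= => /andP[a0 a1] c0 s0 y0 y'0 hy.
have [y's|sy'] := leP y' s.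
  rewrite (_ : minr 1 (s / y') = 1); first by rewrite ge_min lexx.
  by apply/min_idPl; rewrite ler_pdivlMr // mul1r.
rewrite le_min ge_min lexx /= ge_min; apply/orP; right.
rewrite ler_pdivrMr // mulrAC ler_pdivlMr //.
have hsw : s * y' `^ alpha <= s `^ alpha * y'.
  by apply: mul_powR_le_powR_mul; rewrite ?ltW ?a0.
have h1 : s * (y' - y) <= s * (c * y' `^ alpha) by rewrite ler_wpM2l // ltW.
have h2 : c * (s * y' `^ alpha) <= c * (s `^ alpha * y') by rewrite ler_wpM2l.
nra.
Qed.

Definition schedule {R : realType} (kap a : R) (p t : nat) : R := (a + kap * t%:R) ^+ p.

Section Schedule.
Variables (R : realType) (kap a : R).
Hypotheses (a1 : 1 <= a) (kap0 : 0 < kap).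

Let base_le t : a <= a + kap * t%:R.
Proof. by rewrite lerDl mulr_ge0 // ltW. Qed.

Let base_gt0 t : 0 < a + kap * t%:R.
Proof. exact: lt_le_trans ltr01 (le_trans a1 (base_le t)). Qed.

Lemma schedule_ge p t : a ^+ p <= schedule kap a p t.
Proof.
by apply: lerXn2r; rewrite ?nnegrE ?(le_trans ler01 a1) ?(ltW (base_gt0 t)).
Qed.

Lemma schedule_gt0 p t : 0 < schedule kap a p t.
Proof. exact: exprn_gt0. Qed.

Lemma schedule_increment_le (alpha c : R) q t : 0 < alpha ->
  kap * q.+1%:R <= c -> q%:R <= q.+1%:R * alpha ->
  schedule kap a q.+1 t.+1 - schedule kap a q.+1 t
    <= c * schedule kap a q.+1 t.+1 `^ alpha.
Proof.
rewrite /schedule => a0 kc qa.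
set u := a + kap * t.+1%:R; set w := a + kap * t%:R.
have uw : u - w = kap by rewrite /u /w -addn1 natrD; ring.
have wu : w <= u by rewrite -subr_ge0 uw ltW.
have u1 : 1 <= u := le_trans a1 (base_le _).
apply: le_trans (@subrXX_le _ u w q (ltW (base_gt0 t)) wu) _.
rewrite uw (mulrC _ kap).
have uq : u ^+ q <= (u ^+ q.+1) `^ alpha.
  by rewrite -!powR_mulrn ?(le_trans ler01 u1) // -powRrM ler_powR.
apply: le_trans (_ : c * u ^+ q <= _).
  by rewrite ler_wpM2r ?exprn_ge0 ?(le_trans ler01 u1).
by rewrite ler_wpM2l // (le_trans _ kc) // mulr_ge0 // ltW.
Qed.

Hypothesis kap1 : kap <= 1.

Lemma sum_inv_sqr_schedule_le n :
  \sum_(t < n) (schedule kap a 2 t)^-1 + 2 / (kap * (a + kap * n%:R)) <= 2 / (kap * a).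
Proof.
elim: n => [|n IH]; first by rewrite big_ord0 add0r mulr0 addr0.
rewrite big_ord_recr /= -addrA; apply: le_trans IH; rewrite lerD2l.
have -> : a + kap * n.+1%:R = (a + kap * n%:R) + kap by rewrite -addn1 natrD; ring.
rewrite -lerBrDr; apply: inv_sqr_le_telescope => //.
exact: le_trans kap1 (le_trans a1 (base_le n)).
Qed.

Lemma sum_inv_schedule_le q n :
  \sum_(t < n) (schedule kap a q.+2 t)^-1 <= 2 / (kap * a ^+ q.+1).
Proof.
have a0 : 0 < a := lt_le_trans ltr01 a1.
apply: le_trans (_ : \sum_(t < n) (a ^+ q)^-1 * (schedule kap a 2 t)^-1 <= _).
  apply: ler_sum => t _.
  have aq0 : 0 < a ^+ q := exprn_gt0 q a0.
  rewrite -invfM lef_pV2 ?posrE ?schedule_gt0 ?mulr_gt0 ?schedule_gt0 //.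
  rewrite /schedule -[q.+2]addn2 exprD; apply: ler_wpM2r; first exact: sqr_ge0.
  by apply: lerXn2r; rewrite ?nnegrE ?(ltW a0) ?(ltW (base_gt0 t)) ?base_le.
rewrite -mulr_sumr.
have -> : 2 / (kap * a ^+ q.+1) = (a ^+ q)^-1 * (2 / (kap * a)).
  by rewrite exprS; field; rewrite !gt_eqF ?exprn_gt0.
apply: ler_wpM2l; first by rewrite invr_ge0 exprn_ge0 // ltW.
have := sum_inv_sqr_schedule_le n.
have : 0 <= 2 / (kap * (a + kap * n%:R)) by rewrite divr_ge0 ?mulr_ge0 ?ltW.
lra.
Qed.

Lemma trunc_ratio_sum_schedule_le (u B : R) q n : 0 <= u -> 0 <= B ->
  trunc_ratio id (schedule kap a q.+2 n) u + B * \sum_(t < n) (schedule kap a q.+2 t)^-1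
    <= u / a ^+ q.+1 + 2 * B / kap / a ^+ q.+1.
Proof.
move=> u0 B0; have aq0 : 0 < a ^+ q.+1 := exprn_gt0 _ (lt_le_trans ltr01 a1).
apply: lerD.
  rewrite /trunc_ratio ge_min; apply/orP; right; apply: ler_wpM2l => //.
  rewrite lef_pV2 ?posrE ?schedule_gt0 // (le_trans _ (schedule_ge q.+2 n)) //.
  by rewrite [leRHS]exprS; apply: ler_peMl; first exact: ltW.
rewrite (mulrC 2) -mulrA -mulrA -invfM; apply: ler_wpM2l => //.
exact: sum_inv_schedule_le.
Qed.

End Schedule.

Lemma measurable_gt_fun (R : realType) (d : measure_display) (T : measurableType d)
    (f : T -> R) (m : R) :
  measurable_fun setT f -> measurable [set x | m < f x].
Proof.
move=> mf; have := measurable_fun_ltr (measurable_cst m) mf measurableT.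
by move=> /(_ [set true] I); rewrite setTI.
Qed.

Section TruncRatio.
Variables (R : realType) (d : measure_display) (T : measurableType d) (V : T -> R).
Hypotheses (mV : measurable_fun setT V) (V1 : forall x, 1 <= V x).

Lemma trunc_ratio_ge0 y x : 0 < y -> 0 <= trunc_ratio V y x.
Proof.
by move=> y0; rewrite le_min ler01 divr_ge0 ?(le_trans ler01 (V1 x)) ?ltW.
Qed.

Lemma trunc_ratio_le1 y x : trunc_ratio V y x <= 1.
Proof. by rewrite ge_min lexx. Qed.

Lemma measurable_trunc_ratio y : measurable_fun setT (trunc_ratio V y).
Proof.
apply: (@measurable_minr _ _ _ _ (cst 1) (V \* cst y^-1)); first exact: measurable_cst.
by apply: measurable_funM => //; exact: measurable_cst.
Qed.

Lemma integral_trunc_ratio_le (mu : probability T R) (y e : R) : 0 < y ->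
  (\int[mu]_x (V x)%:E <= e%:E)%E ->
  (\int[mu]_x (trunc_ratio V y x)%:E <= (trunc_ratio id y e)%:E)%E.
Proof.
move=> y0 hV; have mT := measurable_trunc_ratio y.
rewrite /trunc_ratio EFin_min le_min; apply/andP; split.
  apply: le_trans (_ : (\int[mu]_x (cst 1%E) x <= _)%E).
    apply: ge0_le_integral => //; first by move=> x _; rewrite lee_fin trunc_ratio_ge0.
      exact/measurable_EFinP.
    by move=> x _; rewrite lee_fin trunc_ratio_le1.
  by rewrite integral_cst // mul1e probability_le1.
apply: le_trans (_ : (\int[mu]_x ((y^-1)%:E * (V x)%:E) <= _)%E).
  apply: ge0_le_integral => //; first by move=> x _; rewrite lee_fin trunc_ratio_ge0.
  - exact/measurable_EFinP.
  - by apply: emeasurable_funM; [exact: measurable_cst | exact/measurable_EFinP].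
  - by move=> x _; rewrite -EFinM lee_fin ge_min mulrC lexx orbT.
rewrite ge0_integralZl //; last first.
- by rewrite lee_fin invr_ge0 ltW.
- by move=> x _; rewrite lee_fin (le_trans ler01 (V1 x)).
- exact/measurable_EFinP.
by rewrite mulrC EFinM; apply: lee_wpmul2l; rewrite // lee_fin invr_ge0 ltW.
Qed.

Lemma probability_le_integral_trunc_ratio (dO : measure_display) (O : measurableType dO)
    (Pr : probability O R) (Y : O -> T) (S : set O) (y : R) :
  measurable_fun setT Y -> measurable S -> 0 < y ->
  (forall w, S w -> y <= V (Y w)) ->
  (Pr S <= \int[Pr]_w (trunc_ratio V y (Y w))%:E)%E.
Proof.
move=> mY mS y0 SV; rewrite -[S]setIT -integral_indic //.
apply: ge0_le_integral => //.
- by apply/measurable_EFinP; exact: measurable_indic.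
- exact/measurable_EFinP/(measurableT_comp (measurable_trunc_ratio y)).
- move=> w _; rewrite lee_fin indicE; case: (boolP (w \in S)) => [/set_mem Sw|_].
    by rewrite le_min lexx ler_pdivlMr // mul1r SV.
  exact: trunc_ratio_ge0.
Qed.

End TruncRatio.

(* [integral_kcomp] is stated for kernels, so the mixture [w |-> k w] under
   [Pr] is presented as the composition of the constant kernel [unit ~> O]
   equal to [Pr] with the kernel [(tt, w) |-> k w]. *)
Section Mixture.
Variables (R : realType) (dO dX : measure_display) (O : measurableType dO)
  (X : measurableType dX) (Pr : probability O R) (k : O -> probability X R).
Hypothesis mk : forall A, measurable A -> measurable_fun [set: O] (fun w => k w A).

Definition const_kernel (_ : unit) : {measure set O -> \bar R} := Pr.
Let measurable_const_kernel A :
  measurable A -> measurable_fun [set: unit] (const_kernel ^~ A).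
Proof. by move=> _; exact: measurable_cst. Qed.
HB.instance Definition _ := isKernel.Build _ _ _ _ _ const_kernel measurable_const_kernel.
Let const_kernel_setT x : const_kernel x [set: O] = 1%E.
Proof. exact: probability_setT. Qed.
HB.instance Definition _ :=
  Kernel_isProbability.Build _ _ _ _ _ const_kernel const_kernel_setT.

Definition mixing_kernel (p : unit * O) : {measure set X -> \bar R} := k p.2.
Let measurable_mixing_kernel A :
  measurable A -> measurable_fun [set: unit * O] (mixing_kernel ^~ A).
Proof. by move=> mA; exact: measurableT_comp (mk mA) (@measurable_snd _ _ unit O). Qed.
HB.instance Definition _ :=
  isKernel.Build _ _ _ _ _ mixing_kernel measurable_mixing_kernel.
Let mixing_kernel_setT x : mixing_kernel x [set: X] = 1%E.
Proof. exact: probability_setT. Qed.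
HB.instance Definition _ :=
  Kernel_isProbability.Build _ _ _ _ _ mixing_kernel mixing_kernel_setT.

Lemma ge0_integral_mixture (Y : O -> X) (f : X -> \bar R) :
  measurable_fun [set: O] Y ->
  (forall A, measurable A -> Pr (Y @^-1` A) = (\int[Pr]_w k w A)%E) ->
  (forall x, 0 <= f x)%E -> measurable_fun [set: X] f ->
  (\int[Pr]_w f (Y w) = \int[Pr]_w \int[k w]_y f y)%E.
Proof.
move=> mY hY f0 mf.
rewrite -(@integral_kcomp _ _ _ _ _ _ R const_kernel mixing_kernel tt f f0 mf) /=.
rewrite (@eq_measure_integral _ _ _ _ (pushforward Pr Y)).
  by rewrite ge0_integral_pushforward.
by move=> A mA _; symmetry; exact: hY.
Qed.

End Mixture.

Lemma NcumS lag j : Ncum lag j.+1 = (Ncum lag j + lag j.+1)%N.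
Proof. by rewrite /Ncum big_nat_recr. Qed.

Lemma Ncum_cover lag : (forall k, (0 < lag k.+1)%N) ->
  forall n, exists j, (Ncum lag j <= n < Ncum lag j.+1)%N.
Proof.
move=> lag_gt0; elim=> [|n [j /andP[h1 h2]]].
  by exists 0%N; rewrite NcumS /Ncum big_geq // add0n lag_gt0.
have [h|h] := ltnP n.+1 (Ncum lag j.+1); first by exists j; rewrite h (leq_trans h1).
have e : Ncum lag j.+1 = n.+1 by apply/eqP; rewrite eqn_leq h h2.
by exists j.+1; rewrite e leqnn /= NcumS e -addn1 leq_add2l lag_gt0.
Qed.

Section AirMCMCChain.
Variables (R : realType) (dX dG dO : measure_display)
  (X : measurableType dX) (G : measurableType dG) (O : measurableType dO)
  (P : G -> X -> probability X R) (lag : nat -> nat)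
  (Pr : probability O R) (F : nat -> set (set O))
  (Xs : nat -> O -> X) (gs : nat -> O -> G) (x0 : X) (g0 : G).
Hypothesis chain : AirMCMC P lag Pr F Xs gs x0 g0.

Lemma AirMCMC_measurable_X n : measurable_fun setT (Xs n).
Proof.
case: chain => sub [_ [mX _]] _ A mA.
by rewrite setTI; exact: (sub n).2 _ (mX n A mA).
Qed.

Lemma AirMCMC_measurable_gamma n : measurable_fun setT (gs n).
Proof.
case: chain => sub [_ [_ [mg _]]] _ A mA.
by rewrite setTI; exact: (sub n).2 _ (mg n A mA).
Qed.

Lemma AirMCMC_start w : Xs 0%N w = x0.
Proof. by case: chain => _ [_ [_ [_ []]]]. Qed.

Hypothesis mP : kernel_family_measurable P.

Lemma AirMCMC_measurable_step_kernel i n A : measurable A ->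
  measurable_fun setT (fun w => P (gs i w) (Xs n w) A).
Proof.
move=> mA; exact: measurableT_comp (mP mA)
  (measurable_fun_pair (AirMCMC_measurable_X n) (AirMCMC_measurable_gamma _)).
Qed.

Hypothesis lag_gt0 : forall k, (0 < lag k.+1)%N.

Lemma AirMCMC_integral_step n : exists i, forall f : X -> \bar R,
  (forall x, 0 <= f x)%E -> measurable_fun [set: X] f ->
  (\int[Pr]_w f (Xs n.+1 w) = \int[Pr]_w \int[P (gs i w) (Xs n w)]_y f y)%E.
Proof.
have [j hj] := Ncum_cover lag_gt0 n; exists (Ncum lag j) => f f0 mf.
have [sub [_ [_ [_ [_ [_ step]]]]]] := chain.
apply: ge0_integral_mixture => //.
- exact: AirMCMC_measurable_step_kernel.
- exact: AirMCMC_measurable_X.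
move=> A mA; rewrite -[_ @^-1` A]setTI (step j) //.
by case: (sub n) => -[F0 FC _] _; rewrite -(setD0 setT); exact: FC.
Qed.

End AirMCMCChain.

Section DriftBound.
Variables (R : realType) (dX : measure_display) (X : measurableType dX)
  (V : X -> R) (c alpha b K : R) (C : set X).
Hypotheses (mV : measurable_fun setT V) (V1 : forall x, 1 <= V x).
Hypotheses (alpha01 : 0 < alpha < 1) (c0 : 0 <= c) (VC : forall x, C x -> V x <= K).

Lemma drift_trunc_ratio_le (Q : probability X R) (x : X) (y y' : R) :
  0 < y -> 0 < y' -> y' - y <= c * y' `^ alpha ->
  (\int[Q]_z (V z)%:E <= (V x - c * V x `^ alpha + b * (\1_C x : R))%:E)%E ->
  (\int[Q]_z (trunc_ratio V y z)%:E <= (trunc_ratio V y' x + (`|K| + `|b|) / y)%:E)%E.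
Proof.
move=> y0 y'0 hy drift; apply: le_trans (integral_trunc_ratio_le mV V1 y0 drift) _.
have Vx0 : 0 < V x := lt_le_trans ltr01 (V1 x).
rewrite lee_fin /trunc_ratio; have [Cx|nCx] := pselect (C x).
- rewrite indicE mem_set // mulr1.
  apply: le_trans (_ : (`|K| + `|b|) / y <= _); last first.
    by rewrite lerDr (trunc_ratio_ge0 V1).
  rewrite ge_min ler_pM2r ?invr_gt0 //; apply/orP; right.
  have := VC Cx; have := ler_norm K; have := ler_norm b.
  have : 0 <= c * V x `^ alpha by rewrite mulr_ge0 ?powR_ge0.
  lra.
- rewrite indicE memNset // mulr0 addr0.
  apply: le_trans (trunc_ratio_drift_le alpha01 c0 Vx0 y0 y'0 hy) _.
  by rewrite lerDl divr_ge0 ?addr_ge0 ?normr_ge0 ?(ltW y0).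
Qed.

Variables (dG dO : measure_display) (G : measurableType dG) (O : measurableType dO)
  (P : G -> X -> probability X R) (lag : nat -> nat)
  (Pr : probability O R) (F : nat -> set (set O))
  (Xs : nat -> O -> X) (gs : nat -> O -> G) (x0 : X) (g0 : G).
Hypotheses (chain : AirMCMC P lag Pr F Xs gs x0 g0)
  (mP : kernel_family_measurable P) (lag_gt0 : forall k, (0 < lag k.+1)%N)
  (drift : simultaneous_poly_drift P V c alpha b C).

Lemma AirMCMC_trunc_ratio_step (y y' : R) n :
  0 < y -> 0 < y' -> y' - y <= c * y' `^ alpha ->
  (\int[Pr]_w (trunc_ratio V y (Xs n.+1 w))%:E <=
   \int[Pr]_w (trunc_ratio V y' (Xs n w))%:E + ((`|K| + `|b|) / y)%:E)%E.
Proof.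
move=> y0 y'0 hy.
have Bb0 : 0 <= (`|K| + `|b|) / y by rewrite divr_ge0 ?addr_ge0 ?(ltW y0).
have mT : measurable_fun setT (fun w => (trunc_ratio V y' (Xs n w))%:E).
  apply/measurable_EFinP.
  exact: measurableT_comp (measurable_trunc_ratio mV y') (AirMCMC_measurable_X chain n).
have [i step] := AirMCMC_integral_step chain mP lag_gt0 n.
rewrite (step (fun x => (trunc_ratio V y x)%:E)); last 2 first.
- by move=> x; rewrite lee_fin trunc_ratio_ge0.
- exact/measurable_EFinP/measurable_trunc_ratio.
apply: le_trans (_ : (\int[Pr]_w (trunc_ratio V y' (Xs n w) + (`|K| + `|b|) / y)%:E <= _)%E).
  apply: ge0_le_integral => //.
  - by move=> w _; apply: integral_ge0 => z _; rewrite lee_fin trunc_ratio_ge0.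
  - apply: (measurable_fun_integral_kernel (AirMCMC_measurable_step_kernel chain mP i n)).
      by move=> x; rewrite lee_fin trunc_ratio_ge0.
    exact/measurable_EFinP/measurable_trunc_ratio.
  - apply/measurable_EFinP; apply: measurable_funD; last exact: measurable_cst.
    exact/measurable_EFinP.
  - by move=> w _; exact: drift_trunc_ratio_le.
under eq_integral do rewrite EFinD.
rewrite ge0_integralD //; last by move=> w _; rewrite lee_fin trunc_ratio_ge0.
rewrite leeD2l // integral_cst // -[leRHS]mule1.
by apply: lee_wpmul2l; rewrite ?lee_fin ?probability_le1.
Qed.

Lemma AirMCMC_trunc_ratio_bound (y : nat -> R) n :
  (forall t, 0 < y t) -> (forall t, y t.+1 - y t <= c * y t.+1 `^ alpha) ->
  (\int[Pr]_w (trunc_ratio V (y 0%N) (Xs n w))%:E <=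
   (trunc_ratio V (y n) x0 + (`|K| + `|b|) * \sum_(t < n) (y t)^-1)%:E)%E.
Proof.
move=> y0 hy.
suff telescope k j : (\int[Pr]_w (trunc_ratio V (y 0%N) (Xs (k + j)%N w))%:E <=
    \int[Pr]_w (trunc_ratio V (y k) (Xs j w))%:E +
    ((`|K| + `|b|) * \sum_(t < k) (y t)^-1)%:E)%E.
  have := telescope n 0%N; rewrite addn0 => /le_trans; apply.
  under eq_integral do rewrite (AirMCMC_start chain).
  rewrite integral_cst // EFinD leeD2r // -[leRHS]mule1.
  by apply: lee_wpmul2l; rewrite ?lee_fin ?trunc_ratio_ge0 ?probability_le1.
elim: k j => [|k IH] j; first by rewrite add0n big_ord0 mulr0 adde0.
rewrite addSn -addnS; apply: le_trans (IH j.+1) _.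
apply: le_trans (leeD2r _ (AirMCMC_trunc_ratio_step j (y0 k) (y0 k.+1) (hy k))) _.
by rewrite -addeA -EFinD big_ord_recr /= mulrDr (addrC (_ / _)).
Qed.

End DriftBound.

Theorem mainTheorem14 (R : realType) (dX dG : measure_display)
  (X : measurableType dX) (G : measurableType dG)
  (P : G -> X -> probability X R) (pi : probability X R)
  (C : set X) (delta : R) (nu : probability X R)
  (V : X -> R) (c alpha b : R) (lag : nat -> nat) :
  kernel_family_measurable P ->
  assumptionA P pi C delta nu ->
  (forall x, 1 <= V x) -> measurable_fun setT V ->
  0 < c ->
  2 / 3 < alpha -> alpha < 1 ->
  simultaneous_poly_drift P V c alpha b C ->
  (exists K : R, forall x, C x -> V x <= K) ->
  (forall k, (0 < lag k.+1)%N) ->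
  exists M : R,
    forall (dO : measure_display) (O : measurableType dO) (Pr : probability O R)
      (F : nat -> set (set O)) (Xs : nat -> O -> X) (gs : nat -> O -> G)
      (x0 : X) (g0 : G),
    AirMCMC P lag Pr F Xs gs x0 g0 ->
    forall (n : nat) (m : R), (0 < n)%N -> M <= m ->
      (Pr [set w | (m < V (Xs n w) `^ (2 * alpha - 1))%R]
        <= (M * V x0 * ln (1 + m) / m)%:E)%E.
Proof.
move=> mP _ V1 mV c0 a23 a1 drift [K VC] lag_gt0.
have alpha0 : 0 < alpha by lra.
have [q [q_incr q_event]] := exists_schedule_exponent a23 a1.
have [kap [kap0 kap1 kapc]] := exists_step_size q.+1 c0.
set B := `|K| + `|b|; have B0 : 0 <= B by rewrite addr_ge0.
exists (maxr (expR 1) (1 + 2 * B / kap)) => dO O Pr F Xs gs x0 g0 chain n m _ hm.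
have me : expR 1 <= m by apply: le_trans hm; rewrite le_max lexx.
have m1 : 1 <= m by apply: le_trans (le_trans _ (expR_ge1Dx 1)) me; rewrite lerDl.
set a := m `^ (q.+1%:R)^-1; have a1' : 1 <= a := powR_invn_ge1 q m1.
pose y := schedule kap a q.+2; have y0 t : 0 < y t := schedule_gt0 a1' kap0 q.+2 t.
have mXn := AirMCMC_measurable_X chain n.
apply: le_trans (probability_le_integral_trunc_ratio mV V1 Pr mXn _ (y0 0%N) _) _.
- apply: measurable_gt_fun.
  exact: measurableT_comp (measurable_powR _) (measurableT_comp mV mXn).
- move=> w; rewrite /y /schedule mulr0 addr0; apply: powR_invnX_le q_event m1 (V1 _).
  lra.
have alpha01 : 0 < alpha < 1 by rewrite alpha0 a1.
apply: le_trans (AirMCMC_trunc_ratio_bound mV V1 alpha01 (ltW c0) VC chain mP lag_gt0 drift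
  n y0 (fun t => schedule_increment_le a1' kap0 t alpha0 kapc q_incr)) _.
have am : a ^+ q.+1 = m := powR_invnX q (le_trans ler01 m1).
rewrite lee_fin; apply: le_trans (trunc_ratio_sum_schedule_le a1' kap0 kap1 q n
  (le_trans ler01 (V1 x0)) B0) _.
rewrite am; apply: addr_div_le_maxr_ln (V1 x0) _ me.
by rewrite divr_ge0 ?mulr_ge0 // ltW.
Qed.
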